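(* Let $p$ be the POP of size $3$ on $\{1,2,3\}$ whose only relation is $3<_p2$ (so $1$ is isolated), and let $p'$ be the POP of size $3$ whose only relation is $2<_{p'}3$. Then $p\sim_s p'$. Equivalently, the set of classical patterns $\{132,231,321\}$ is shape-Wilf-equivalent to the set $\{123,213,312\}$: for every Ferrers board $\lambda$, the number of transversals of $\lambda$ avoiding all of $132,231,321$ equals the number of transversals avoiding all of $123,213,312$.
   Context: A partially ordered pattern (POP) $p$ of size $m$ is a partial order $\le_p$ on $[m]$. A Ferrers board $\lambda=(\lambda_1\ge\dots\ge\lambda_n>0)$ with $\lambda_1=n$ is drawn in French notation: rows numbered $1,\dots,n$ from bottom to top, row $i$ consisting of cells $(i,1),\dots,(i,\lambda_i)$. A transversal of $\lambda$ is a $0/1$-filling of its cells with exactly one $1$ in each row and column. A transversal $T$ contains a POP $p$ of size $m$ if there are rows $r_1<\dots<r_m$ and columns $c_1<\dots<c_m$ such that every cell $(r_a,c_b)$ lies in $\lambda$ and the $1$ of column $c_b$ lies in row $r_{\sigma(b)}$ for each $b$ (so $\sigma\in\mathfrak S_m$), with $\sigma(j)<\sigma(j')$ whenever $j<_p j'$; $T$ contains a classical pattern $\alpha\in\mathfrak S_m$ if this holds with $\sigma=\alpha$. Otherwise $T$ avoids it. Two POPs (or sets of patterns) are shape-Wilf-equivalent, $\sim_s$, if for every Ferrers board the numbers of avoiding transversals coincide. *)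

From mathcomp Require Import all_boot all_order all_fingroup.
Set Implicit Arguments. Unset Strict Implicit. Unset Printing Implicit Defensive.

(* Rows and columns are 0-indexed: row i : 'I_n is row i+1 of the paper,
   and lam i is the length lambda_{i+1}.  Column j : 'I_n is column j+1;
   cell (i, j) lies in the board iff j < lam i. *)
Definition ferrers (n : nat) (lam : 'I_n -> nat) : Prop :=
  (forall i j : 'I_n, i <= j -> lam j <= lam i) /\
  (forall i : 'I_n, 0 < lam i) /\
  (forall i : 'I_n, val i = 0 -> lam i = n).

(* A transversal is encoded as the permutation T : 'S_n sending a row to the
   column holding its 1; all its 1s must lie in the board. *)
Definition transversal (n : nat) (lam : 'I_n -> nat) (T : 'S_n) : bool :=
  [forall i : 'I_n, T i < lam i].

Definition pop_contains (m : nat) (P : rel 'I_m) (n : nat) (lam : 'I_n -> nat)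
    (T : 'S_n) : bool :=
  [exists r : {ffun 'I_m -> 'I_n}, exists c : {ffun 'I_m -> 'I_n},
   exists s : 'S_m,
     [forall a : 'I_m, forall b : 'I_m,
        [&& (a < b) ==> (r a < r b), (a < b) ==> (c a < c b),
            c b < lam (r a) & P a b ==> (s a < s b)]]
     && [forall b : 'I_m, (T^-1)%g (c b) == r (s b)]].

Definition num_avoiders (m : nat) (P : rel 'I_m) (n : nat) (lam : 'I_n -> nat) : nat :=
  #|[set T : 'S_n | transversal lam T && ~~ pop_contains P lam T]|.

Definition shape_wilf_equiv (m : nat) (P Q : rel 'I_m) : Prop :=
  forall (n : nat) (lam : 'I_n -> nat), ferrers lam ->
    num_avoiders P lam = num_avoiders Q lam.

(* p : only relation 3 <_p 2 ; p' : only relation 2 <_p' 3 (1-indexed). *)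
Definition pop_p : rel 'I_3 := fun j j' => (val j == 2) && (val j' == 1).
Definition pop_p' : rel 'I_3 := fun j j' => (val j == 1) && (val j' == 2).

From Pilot Require Import Defs.
From mathcomp Require Import all_boot all_order all_fingroup.
From mathcomp Require Import zify.
Set Implicit Arguments. Unset Strict Implicit. Unset Printing Implicit Defensive.

(* Transposed, a transversal is a permutation s sending each column to the row
   of its 1, and it avoids p (resp. p') iff in every triple of columns i < j < k
   whose 1s all lie below the height of column k, the 1 of column j lies below
   (resp. above) the 1 of column k.  Deleting the last, shortest, column, of
   height L, leaves a transversal of the board with all heights lowered by one.
   For p the deleted 1 must lie in row L-1, or in row L-2 provided the value L-2
   of the remaining permutation comes before every other value below L-1; for p'
   it must lie in row 0, or in row 1 provided the value 0 comes before every
   other value below L-1.  Refined by such "leading" conditions, the two counts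
   satisfy recurrences that match term by term, since for p' the leading
   condition on 0 does not depend on the threshold; induction on the number of
   columns concludes. *)

Lemma card_perm_lift_max n (P : pred 'S_n.+1) :
  #|[set t | P t]| = \sum_(v < n.+1) #|[set s : 'S_n | P (lift_perm ord_max v s)]|.
Proof.
rewrite -sum1_card (eq_bigl P); last by move=> t; rewrite inE.
rewrite (partition_big (fun t : 'S_n.+1 => t ord_max) predT) //=.
apply: eq_bigr => v _; rewrite -sum1_card.
rewrite (reindex (lift_perm ord_max v)); last first.
  pose ulsf i (s : 'S_n.+1) k := odflt k (unlift (s i) (s (lift i k))).
  have ulsfK i (s : 'S_n.+1) k : lift (s i) (ulsf i s k) = s (lift i k).
    rewrite /ulsf; have:= neq_lift i k.
    by rewrite -(can_eq (permK s)) => /unlift_some[] ? ? ->.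
  have inj_ulsf : injective (ulsf ord_max _).
    move=> s; apply: can_inj (ulsf (s ord_max) s^-1%g) _ => k'.
    by rewrite {1}/ulsf ulsfK !permK liftK.
  exists (fun s => perm (inj_ulsf s)) => [s _ | s].
    by apply/permP=> k'; rewrite permE /ulsf lift_perm_lift lift_perm_id liftK.
  move/andP=> [_ /eqP si0]; apply/permP=> k.
  case: (unliftP ord_max k) => [k'|] ->; rewrite ?lift_perm_id //.
  by rewrite lift_perm_lift -si0 permE ulsfK.
by apply: eq_bigl => s; rewrite inE lift_perm_id eqxx andbT.
Qed.

Lemma lift_perm_max_lift n (v : 'I_n.+1) (s : 'S_n) k :
  lift_perm ord_max v s (lift ord_max k) = bump v (s k) :> nat.
Proof. by rewrite lift_perm_lift. Qed.

Lemma ord_max_ltF n (x : 'I_n.+1) : (@ord_max n < x) = false.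
Proof. by rewrite ltnNge -ltnS ltn_ord. Qed.

Lemma sum_eq_indicator N a X : \sum_(v < N) (v == a :> nat) * X = (a < N) * X.
Proof.
case: (ltnP a N) => lt_aN.
  rewrite (bigD1 (Ordinal lt_aN)) //= eqxx mul1n big1 ?addn0 // => v ne_va.
  suff /negbTE-> : (v : nat) != a by [].
  by apply: contra ne_va => /eqP eq_va; apply/eqP/val_inj.
by rewrite big1 // => v _; have /negbTE-> : (v : nat) != a by apply/eqP; move: (ltn_ord v); lia.
Qed.

Lemma card_two_cases m (x y : bool) (A B : pred 'S_m) : ~~ (x && y) ->
  #|[set s | x && A s || y && B s]| = x * #|[set s | A s]| + y * #|[set s | B s]|.
Proof.
case: x; case: y => //= _; rewrite ?mul1n ?mul0n ?addn0 ?add0n.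
- by apply: eq_card => s; rewrite !inE orbF.
- by apply: eq_card => s; rewrite !inE.
- by apply/eqP; rewrite cards_eq0; apply/eqP/setP => s; rewrite !inE.
Qed.

Lemma sum_card_cases N m (a b : nat) (ca cb : bool) (A B : pred 'S_m)
    (Q : 'I_N -> pred 'S_m) :
  (ca -> a < N) -> (cb -> b < N) -> ~~ [&& ca, cb & a == b] ->
  (forall v s, Q v s = (v == a :> nat) && ca && A s || (v == b :> nat) && cb && B s) ->
  \sum_(v < N) #|[set s | Q v s]| = ca * #|[set s | A s]| + cb * #|[set s | B s]|.
Proof.
move=> a_lt b_lt not_both QE.
have card_Q v : #|[set s | Q v s]| =
    (v == a :> nat) * (ca * #|[set s | A s]|) + (v == b :> nat) * (cb * #|[set s | B s]|).
  rewrite !mulnA !mulnb -card_two_cases; last first.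
    by apply: contra not_both => /and3P [/andP [/eqP <- ->] /eqP <- ->]; rewrite eqxx.
  by apply: eq_card => s; rewrite !inE QE.
rewrite (eq_bigr _ (fun v _ => card_Q v)) big_split /= !sum_eq_indicator.
have indicatorK (c : bool) k x : (c -> k < N) -> (k < N) * (c * x) = c * x.
  by case: c => [/(_ isT)->|]; rewrite ?mul1n ?mul0n ?muln0.
by rewrite !indicatorK.
Qed.

Lemma bump_lt_pred v x L : v < L -> (bump v x < L) = (x < L.-1).
Proof. by rewrite /bump; case: (leqP v x) => /= *; lia. Qed.

Lemma bump_lt_pivot v x : (bump v x < v) = (x < v).
Proof. by rewrite /bump; case: (leqP v x) => /= *; lia. Qed.

Lemma pivot_lt_bump v x : (v < bump v x) = (v <= x).
Proof. by rewrite /bump; case: (leqP v x) => /= *; lia. Qed.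

Lemma bump_eq_below v x w : w < v -> (bump v x == w) = (x == w).
Proof. by rewrite /bump; case: (leqP v x) => /= *; apply/eqP/eqP; lia. Qed.

Lemma leq_bump_below v x w : w <= v -> (w <= bump v x) = (w <= x).
Proof. by rewrite /bump; case: (leqP v x) => /= *; lia. Qed.

Lemma bump_eq_succ v x : (bump v x == v.+1) = (x == v).
Proof. by rewrite /bump; case: (leqP v x) => /= *; apply/eqP/eqP; lia. Qed.

Lemma leq_bump_succ v x : (v.+2 <= bump v x) = (v.+1 <= x).
Proof. by rewrite /bump; case: (leqP v x) => /= *; lia. Qed.

Lemma ltn_bump2 v a b : (bump v a < bump v b) = (a < b).
Proof. by rewrite !ltnNge leq_bump2. Qed.

Lemma perm_hits n (s : 'S_n) w : w < n -> exists i : 'I_n, s i = w :> nat.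
Proof. by move=> lt_wn; exists (s^-1 (Ordinal lt_wn))%g; rewrite permKV. Qed.

(* A board is given by its nonincreasing column heights h: cell (r, k) lies in
   it iff r < h k.  A permutation s places the 1 of column k in row s k.  Rows
   s i, s j, s k of columns i < j < k that lie below h k span a submatrix
   inside the board, column k being the shortest. *)
Definition under_heights n (h : nat -> nat) (s : 'S_n) := [forall k : 'I_n, s k < h k].

Definition triples_sorted (ord : rel nat) n (h : nat -> nat) (s : 'S_n) :=
  [forall i : 'I_n, forall j : 'I_n, forall k : 'I_n,
    [&& i < j, j < k, s i < h k, s j < h k & s k < h k] ==> ord (s j) (s k)].

Definition sorted_transversal ord n h (s : 'S_n) :=
  under_heights h s && triples_sorted ord h s.

Definition lower_heights (h : nat -> nat) k := (h k).-1.

(* The triples of [lift_perm ord_max v s] ending in the new last column, of height L. *)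
Definition last_col_sorted (ord : rel nat) n (s : 'S_n) v L :=
  [forall i : 'I_n, forall j : 'I_n, [&& i < j, s i < L.-1 & s j < L.-1] ==> ord (bump v (s j)) v].

Definition leads_below n (s : 'S_n) u m :=
  [forall i : 'I_n, forall j : 'I_n, (s i == u :> nat) && (j < i) ==> (m <= s j)].

Definition count_sorted ord n h := #|[set s : 'S_n | sorted_transversal ord h s]|.

Definition count_leading ord n h u m :=
  #|[set s : 'S_n | sorted_transversal ord h s && leads_below s u m]|.

Section DeleteLastColumn.

Variables (n : nat) (h : nat -> nat) (v : 'I_n.+1) (s : 'S_n).
Hypothesis h_noninc : {homo h : i j /~ i <= j}.
Local Notation t := (lift_perm ord_max v s).

Lemma lt_heights_last (k : 'I_n) : v < h n -> v < h k.
Proof. by move=> lt_v; apply: leq_trans lt_v _; apply: h_noninc; apply: ltnW. Qed.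

Lemma under_heights_lift :
  under_heights h t = (v < h n) && under_heights (lower_heights h) s.
Proof.
apply/forallP/andP => [t_under | [lt_v /forallP s_under] k].
  have := t_under ord_max; rewrite lift_perm_id => lt_v; split=> //.
  apply/forallP => k; have := t_under (lift ord_max k).
  by rewrite lift_perm_max_lift lift_max bump_lt_pred // lt_heights_last.
case: (unliftP ord_max k) => [k'|] ->; last by rewrite lift_perm_id.
by rewrite lift_perm_max_lift lift_max bump_lt_pred ?lt_heights_last ?s_under.
Qed.

Lemma leads_below_liftE u m : u != v :> nat ->
  leads_below t u m =
  [forall i : 'I_n, forall j : 'I_n, (bump v (s i) == u) && (j < i) ==> (m <= bump v (s j))].
Proof.
move=> ne_uv; apply/forallP/forallP => lead i; apply/forallP => j.
  have := forallP (lead (lift ord_max i)) (lift ord_max j).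
  by rewrite !lift_perm_max_lift !lift_max.
case: (unliftP ord_max i) => [i'|] ->; last first.
  by rewrite lift_perm_id; apply/implyP => /andP [/eqP s_u]; move: ne_uv; rewrite s_u eqxx.
case: (unliftP ord_max j) => [j'|] ->; last by rewrite ord_max_ltF andbF.
by have := forallP (lead i') j'; rewrite !lift_perm_max_lift !lift_max.
Qed.

Lemma leads_below_lift_pivot m : 0 < n -> bump v 0 < m -> leads_below t v m = false.
Proof.
move=> n_gt0 lt_m; apply/negbTE/forallP => /(_ ord_max) /forallP.
have [j sj0] := perm_hits s n_gt0.
move=> /(_ (lift ord_max j)); rewrite lift_perm_id lift_perm_max_lift sj0 eqxx lift_max.
by rewrite [_ < _](ltn_ord j) leqNgt lt_m.
Qed.

Lemma leads_below_lift_below m : 0 < m <= v ->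
  leads_below t m.-1 m = leads_below s m.-1 m.
Proof.
move=> /andP [m_gt0 le_mv]; rewrite leads_below_liftE; last by apply/eqP; lia.
apply: eq_forallb => i; apply: eq_forallb => j.
by rewrite bump_eq_below ?leq_bump_below //; lia.
Qed.

Lemma leads_below_lift_succ : leads_below t v.+1 v.+2 = leads_below s v v.+1.
Proof.
rewrite leads_below_liftE; last by apply/eqP; lia.
apply: eq_forallb => i; apply: eq_forallb => j.
by rewrite bump_eq_succ leq_bump_succ.
Qed.

Lemma leads_below_lift_one m L : v = 1 :> nat -> 2 <= L -> m <= L ->
  leads_below s 0 L.-1 -> leads_below t 0 m.
Proof.
move=> v1 L_ge2 le_mL /forallP lead; rewrite leads_below_liftE ?v1 //.
apply/forallP => i; apply/forallP => j; apply/implyP => /andP [].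
rewrite bump_eq_below ?v1 // => s_i0 lt_ji.
have := forallP (lead i) j; rewrite s_i0 lt_ji /=.
by rewrite /bump; case: leqP => /= *; lia.
Qed.

Variable ord : rel nat.
Hypothesis ord_bump : forall v a b, ord (bump v a) (bump v b) = ord a b.

Lemma triples_sorted_lift : v < h n ->
  triples_sorted ord h t = triples_sorted ord (lower_heights h) s && last_col_sorted ord s v (h n).
Proof.
move=> lt_v; have lt_vk := lt_heights_last _ lt_v.
apply/idP/andP.
  move=> /forallP sorted_t; split.
    apply/forallP => i; apply/forallP => j; apply/forallP => k.
    have := forallP (forallP (sorted_t (lift ord_max i)) (lift ord_max j)) (lift ord_max k).
    by rewrite !lift_perm_max_lift !lift_max !bump_lt_pred // ord_bump.
  apply/forallP => i; apply/forallP => j.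
  have := forallP (forallP (sorted_t (lift ord_max i)) (lift ord_max j)) ord_max.
  by rewrite !lift_perm_max_lift lift_perm_id !lift_max !bump_lt_pred // lt_v ltn_ord andbT.
move=> [/forallP sorted_s /forallP last_sorted].
apply/forallP => i; apply/forallP => j; apply/forallP => k.
case: (unliftP ord_max i) => [i'|] ->; last by rewrite ord_max_ltF.
case: (unliftP ord_max j) => [j'|] ->; last by rewrite ord_max_ltF /= andbF.
case: (unliftP ord_max k) => [k'|] ->.
  have := forallP (forallP (sorted_s i') j') k'.
  by rewrite !lift_perm_max_lift !lift_max !bump_lt_pred // ord_bump.
have := forallP (last_sorted i') j'.
by rewrite !lift_perm_max_lift lift_perm_id !lift_max !bump_lt_pred // lt_v ltn_ord andbT.
Qed.

Lemma sorted_transversal_lift :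
  sorted_transversal ord h t =
  [&& v < h n, sorted_transversal ord (lower_heights h) s & last_col_sorted ord s v (h n)].
Proof.
rewrite /sorted_transversal under_heights_lift.
by case: ltnP => lt_v //=; rewrite triples_sorted_lift // andbA.
Qed.

End DeleteLastColumn.

Lemma leads_below_zero_one n (s : 'S_n) : leads_below s 0 1.
Proof.
apply/forallP => i; apply/forallP => j; apply/implyP => /andP [/eqP s_i0 lt_ji].
rewrite lt0n; apply: contraTneq lt_ji => s_j0.
by rewrite -leqNgt (perm_inj (val_inj (etrans s_j0 (esym s_i0)))).
Qed.

Section LastColumn.

Variables (n : nat) (s : 'S_n) (v L : nat).
Hypotheses (lt_vL : v < L) (le_Ln : L <= n.+1).

Lemma last_col_sorted_ltnE :
  last_col_sorted ltn s v L = (v == L.-1) || (v.+2 == L) && leads_below s L.-2 L.-1.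
Proof.
have [->|ne_v] := eqVneq v L.-1.
  rewrite orTb; apply/forallP => i; apply/forallP => j; apply/implyP => /and3P [_ _ lt_j].
  by rewrite /= bump_lt_pivot.
have below_v (i j : 'I_n) :
    i < j -> s i < L.-1 -> s j < L.-1 -> last_col_sorted ltn s v L -> s j < v.
  by move=> lt_ij lt_i lt_j /forallP/(_ i)/forallP/(_ j); rewrite lt_ij lt_i lt_j /= bump_lt_pivot.
have [a s_a] : exists a, s a = v :> nat by apply: perm_hits; lia.
have [b s_b] : exists b, s b = L.-2 :> nat by apply: perm_hits; lia.
apply/idP/andP => [last_sorted | [/eqP vL /forallP lead]].
  have vL : v.+2 = L.
    case: (ltngtP a b) => [lt_ab|lt_ba|/val_inj eq_ab].
    - by have := below_v a b lt_ab; rewrite s_a s_b; lia.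
    - by have := below_v b a lt_ba; rewrite s_a s_b; lia.
    - by move: s_a; rewrite eq_ab s_b; lia.
  split; first exact/eqP.
  apply/forallP => i; apply/forallP => j; apply/implyP => /andP [/eqP s_i lt_ji].
  by rewrite leqNgt; apply/negP => lt_j; have := below_v j i lt_ji lt_j; rewrite s_i; lia.
apply/forallP => i; apply/forallP => j; apply/implyP => /and3P [lt_ij lt_i lt_j].
rewrite /= bump_lt_pivot; suff : s j != L.-2 :> nat by move/eqP; lia.
by apply/eqP => s_j; have := forallP (lead j) i; rewrite s_j eqxx lt_ij /=; lia.
Qed.

Lemma last_col_sorted_gtnE :
  last_col_sorted gtn s v L = (v == 0) || (v == 1) && leads_below s 0 L.-1.
Proof.
have [->|ne_v] := eqVneq v 0.
  by apply/forallP => i; apply/forallP => j; apply/implyP => _; rewrite /= pivot_lt_bump.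
have above_v (i j : 'I_n) :
    i < j -> s i < L.-1 -> s j < L.-1 -> last_col_sorted gtn s v L -> v <= s j.
  by move=> lt_ij lt_i lt_j /forallP/(_ i)/forallP/(_ j); rewrite lt_ij lt_i lt_j /= pivot_lt_bump.
apply/idP/andP => [last_sorted | [/eqP v1 /forallP lead]].
  have v1 : v = 1.
    case: (leqP v 1) => [|lt_1v]; first lia.
    have [a s_a] : exists a, s a = 0 :> nat by apply: perm_hits; lia.
    have [b s_b] : exists b, s b = 1 :> nat by apply: perm_hits; lia.
    case: (ltngtP a b) => [lt_ab|lt_ba|/val_inj eq_ab].
    - by have := above_v a b lt_ab; rewrite s_a s_b; lia.
    - by have := above_v b a lt_ba; rewrite s_a s_b; lia.
    - by move: s_a; rewrite eq_ab s_b.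
  split; first exact/eqP.
  apply/forallP => i; apply/forallP => j; apply/implyP => /andP [/eqP s_i lt_ji].
  by rewrite leqNgt; apply/negP => lt_j; have := above_v j i lt_ji lt_j; rewrite s_i; lia.
apply/forallP => i; apply/forallP => j; apply/implyP => /and3P [lt_ij lt_i lt_j].
rewrite /= pivot_lt_bump v1 lt0n.
by apply/eqP => s_j; have := forallP (lead j) i; rewrite s_j eqxx lt_ij /=; lia.
Qed.

End LastColumn.

Lemma leads_below_lt N (t : 'S_N) u m (p q : 'I_N) :
  leads_below t u m -> t p = u :> nat -> t q < m -> t q != u :> nat -> p < q.
Proof.
move=> /forallP/(_ p)/forallP/(_ q) lead t_p lt_q ne_q; move: lead; rewrite t_p eqxx /=.
case: (ltngtP p q) => [//|lt_qp|/val_inj eq_pq] /=; first by rewrite leqNgt lt_q.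
by move: ne_q; rewrite -eq_pq t_p eqxx.
Qed.

(* Columns holding L.-1, m.-1 and m.-2, in this order, would form a forbidden triple. *)
Lemma leads_below_sorted_ltnF N (h : nat -> nat) (t : 'S_N) L m :
  (forall k : 'I_N, L <= h k) -> 2 <= m < L -> L <= N -> triples_sorted ltn h t ->
  leads_below t L.-1 L -> leads_below t m.-1 m = false.
Proof.
move=> le_Lh /andP [m_ge2 lt_mL] le_LN /forallP sorted_t leadL; apply/negP => leadm.
have [p t_p] : exists p, t p = L.-1 :> nat by apply: perm_hits; lia.
have [q t_q] : exists q, t q = m.-1 :> nat by apply: perm_hits; lia.
have [r t_r] : exists r, t r = m.-2 :> nat by apply: perm_hits; lia.
have lt_pq : p < q by apply: (leads_below_lt leadL); rewrite ?t_q //; apply/eqP; lia.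
have lt_qr : q < r by apply: (leads_below_lt leadm); rewrite ?t_r //; apply/eqP; lia.
have := forallP (forallP (sorted_t p) q) r.
by rewrite lt_pq lt_qr t_p t_q t_r /=; have := le_Lh r; lia.
Qed.

Section LastColumnRecurrences.

Variables (n : nat) (h : nat -> nat).
Hypotheses (h_noninc : {homo h : i j /~ i <= j}) (h_gt0 : 0 < h n) (h_le : h n <= n.+1).
Local Notation L := (h n).
Local Notation h' := (lower_heights h).

Lemma sorted_transversal_lift_ltn (v : 'I_n.+1) s :
  sorted_transversal ltn h (lift_perm ord_max v s) =
  (v == L.-1 :> nat) && sorted_transversal ltn h' s
  || (v == L.-2 :> nat) && (1 < L) && (sorted_transversal ltn h' s && leads_below s L.-2 L.-1).
Proof.
rewrite sorted_transversal_lift //; last exact: ltn_bump2.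
have [lt_v|le_Lv] := ltnP v L; last first.
  have /negbTE-> : v != L.-1 :> nat by apply/eqP; lia.
  by have /negbTE-> : v != L.-2 :> nat by apply/eqP; lia.
rewrite last_col_sorted_ltnE //.
have -> : (v.+2 == L) = (v == L.-2 :> nat) && (1 < L) by apply/eqP/andP => [|[/eqP]]; lia.
by case: (v == L.-1 :> nat); case: sorted_transversal; rewrite /= ?andbT ?andbF ?orbF.
Qed.

Lemma sorted_transversal_lift_gtn (v : 'I_n.+1) s :
  sorted_transversal gtn h (lift_perm ord_max v s) =
  (v == 0 :> nat) && sorted_transversal gtn h' s
  || (v == 1 :> nat) && (1 < L) && (sorted_transversal gtn h' s && leads_below s 0 L.-1).
Proof.
rewrite sorted_transversal_lift //; last by move=> w a b; exact: ltn_bump2.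
have [lt_v|le_Lv] := ltnP v L; last first.
  have /negbTE-> : v != 0 :> nat by apply/eqP; lia.
  by case: eqP => //= v1; rewrite ltnNge -v1 le_Lv.
rewrite last_col_sorted_gtnE //.
have {1}-> : (v == 1 :> nat) = (v == 1 :> nat) && (1 < L) by case: eqP => //= v1; rewrite -v1 lt_v.
by case: (v == 0 :> nat); case: sorted_transversal; rewrite /= ?andbT ?andbF ?orbF.
Qed.

Lemma sorted_leading_lift_ltn (v : 'I_n.+1) s m : 2 <= m <= L ->
  sorted_transversal ltn h (lift_perm ord_max v s) && leads_below (lift_perm ord_max v s) m.-1 m =
  (v == L.-1 :> nat) && (m < L) && (sorted_transversal ltn h' s && leads_below s m.-1 m)
  || (v == L.-2 :> nat) && (m == L) && (sorted_transversal ltn h' s && leads_below s L.-2 L.-1).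
Proof.
move=> /andP [m_ge2 le_mL]; rewrite sorted_transversal_lift_ltn.
have [vL|ne_vL] := eqVneq (v : nat) L.-1.
  have /negbTE-> : v != L.-2 :> nat by apply/eqP; lia.
  rewrite /= !orbF andbC; have [lt_mL|le_Lm] := ltnP m L.
    by rewrite leads_below_lift_below //; lia.
  have -> : m.-1 = v by lia.
  by rewrite leads_below_lift_pivot //; [lia | rewrite /bump; case: leqP => /=; lia].
have [vL2|ne_vL2] := eqVneq (v : nat) L.-2; last by [].
have L_gt1 : 1 < L by lia.
have leadL : leads_below (lift_perm ord_max v s) L.-1 L = leads_below s L.-2 L.-1.
  have -> : L.-2 = v by lia.
  have -> : L.-1 = v.+1 by lia.
  by rewrite (_ : L = v.+2) ?leads_below_lift_succ //; lia.
rewrite L_gt1 /=; have [mL|ne_mL] := eqVneq m L.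
  by rewrite mL leadL; case: sorted_transversal; case: leads_below.
case s_ok: (sorted_transversal ltn h' s && leads_below s L.-2 L.-1) => //=.
have /andP [_ sorted_t] : sorted_transversal ltn h (lift_perm ord_max v s).
  by rewrite sorted_transversal_lift_ltn vL2 eqxx L_gt1 s_ok orbT.
apply: (leads_below_sorted_ltnF _ _ h_le sorted_t) => [k||].
- by apply: h_noninc; rewrite -ltnS.
- by apply/andP; split; lia.
- by rewrite leadL; case/andP: s_ok.
Qed.

Lemma sorted_leading_lift_gtn (v : 'I_n.+1) s m : 2 <= m <= L ->
  sorted_transversal gtn h (lift_perm ord_max v s) && leads_below (lift_perm ord_max v s) 0 m =
  (v == 1 :> nat) && (sorted_transversal gtn h' s && leads_below s 0 L.-1).
Proof.
move=> /andP [m_ge2 le_mL]; rewrite sorted_transversal_lift_gtn.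
have [v0|ne_v0] := eqVneq (v : nat) 0.
  have -> : leads_below (lift_perm ord_max v s) 0 m = false.
    by rewrite -[X in leads_below _ X _]v0 leads_below_lift_pivot; [| lia | rewrite v0].
  by rewrite andbF v0.
have [v1|ne_v1] := eqVneq (v : nat) 1; last by [].
rewrite (_ : 1 < L) //=; last lia.
case s_ok: (sorted_transversal gtn h' s && leads_below s 0 L.-1) => //=.
by apply: (leads_below_lift_one (L := L) v1); [lia | done | case/andP: s_ok].
Qed.

Lemma count_sorted_ltn_rec :
  count_sorted ltn n.+1 h = count_sorted ltn n h' + (1 < L) * count_leading ltn n h' L.-2 L.-1.
Proof.
rewrite /count_sorted /count_leading card_perm_lift_max -[X in X + _]mul1n.
apply: (@sum_card_cases _ _ L.-1 L.-2 true) => [_|_||v s].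
- lia.
- lia.
- by apply/negP => /and3P [_ ? /eqP]; lia.
- by rewrite andbT sorted_transversal_lift_ltn.
Qed.

Lemma count_sorted_gtn_rec :
  count_sorted gtn n.+1 h = count_sorted gtn n h' + (1 < L) * count_leading gtn n h' 0 L.-1.
Proof.
rewrite /count_sorted /count_leading card_perm_lift_max -[X in X + _]mul1n.
apply: (@sum_card_cases _ _ 0 1 true) => [_|?||v s].
- lia.
- lia.
- by rewrite !andbF.
- by rewrite andbT sorted_transversal_lift_gtn.
Qed.

Lemma count_leading_ltn_rec m : 2 <= m <= L ->
  count_leading ltn n.+1 h m.-1 m =
  (m < L) * count_leading ltn n h' m.-1 m + (m == L) * count_leading ltn n h' L.-2 L.-1.
Proof.
move=> m_range; rewrite /count_leading card_perm_lift_max.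
apply: (@sum_card_cases _ _ L.-1 L.-2) => [_|_||v s].
- lia.
- lia.
- by apply/negP => /and3P [/ltn_eqF ->].
- exact: sorted_leading_lift_ltn.
Qed.

Lemma count_leading_gtn_rec m : 2 <= m <= L ->
  count_leading gtn n.+1 h 0 m = count_leading gtn n h' 0 L.-1.
Proof.
move=> m_range; rewrite /count_leading card_perm_lift_max -[RHS]add0n -[RHS]mul1n.
apply: (@sum_card_cases _ _ 0 1 false true pred0) => [//|_||v s].
- lia.
- by [].
- by rewrite sorted_leading_lift_gtn // andbF andbT.
Qed.

End LastColumnRecurrences.

Lemma leads_below_leq n (s : 'S_n) u m m' : m' <= m -> leads_below s u m -> leads_below s u m'.
Proof.
move=> le_m /forallP lead; apply/forallP => i; apply/forallP => j.
by apply/implyP => /(implyP (forallP (lead i) j)); apply: leq_trans.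
Qed.

(* A column left of the 0 holding a value below m' would form a forbidden triple
   with the 0 and the 1. *)
Lemma leads_below_gtn_sorted n h (s : 'S_n) m m' : {homo h : i j /~ i <= j} ->
  triples_sorted gtn h s -> 2 <= m <= m' -> m' <= h n.-1 ->
  leads_below s 0 m = leads_below s 0 m'.
Proof.
move=> h_noninc /forallP sorted_s /andP [m_ge2 le_mm'] le_m'h.
apply/idP/idP => [lead|]; last exact: leads_below_leq.
apply/forallP => i; apply/forallP => j; apply/implyP => /andP [/eqP s_i lt_ji].
rewrite leqNgt; apply/negP => lt_j.
have [b s_b] : exists b, s b = 1 :> nat by apply: perm_hits; have := ltn_ord i; lia.
have lt_ib : i < b by apply: (leads_below_lt lead); rewrite ?s_b //; lia.
have le_m'b : m' <= h b by apply: leq_trans le_m'h (h_noninc _ _ _); have := ltn_ord b; lia.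
have := forallP (forallP (sorted_s j) i) b.
by rewrite lt_ji lt_ib s_i s_b /=; lia.
Qed.

Lemma count_leading_gtn_eq n h m m' : {homo h : i j /~ i <= j} ->
  2 <= m <= m' -> m' <= h n.-1 ->
  count_leading gtn n h 0 m = count_leading gtn n h 0 m'.
Proof.
move=> h_noninc m_range le_m'h; apply: eq_card => s; rewrite !inE.
case/boolP: (sorted_transversal gtn h s) => //= /andP [_ sorted_s].
exact: (leads_below_gtn_sorted h_noninc sorted_s m_range le_m'h).
Qed.

Lemma count_leading_zero_one ord n h : count_leading ord n h 0 1 = count_sorted ord n h.
Proof. by apply: eq_card => s; rewrite !inE leads_below_zero_one andbT. Qed.

Lemma count_sorted_last0 ord n h : h n = 0 -> count_sorted ord n.+1 h = 0.
Proof.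
move=> h_n0; apply/eqP; rewrite cards_eq0; apply/eqP/setP => s; rewrite !inE.
apply/negbTE/nandP; left; apply/forallPn; exists ord_max; by rewrite h_n0.
Qed.

Lemma lower_heights_noninc h :
  {homo h : i j /~ i <= j} -> {homo lower_heights h : i j /~ i <= j}.
Proof. by move=> h_noninc i j /h_noninc; rewrite /lower_heights; lia. Qed.

Lemma count_sorted_ltn_gtn n : forall h, {homo h : i j /~ i <= j} -> h 0 <= n ->
  count_sorted ltn n h = count_sorted gtn n h /\
  forall m, 0 < m <= h n.-1 -> count_leading ltn n h m.-1 m = count_leading gtn n h 0 m.
Proof.
elim: n => [|n IH] h h_noninc h0_le.
  have sorted0 ord (s : 'S_0) : triples_sorted ord h s by apply/forallP => -[].
  have leads0 (s : 'S_0) u m : leads_below s u m by apply/forallP => -[].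
  by split=> [|m _]; apply: eq_card => s; rewrite !inE /sorted_transversal !sorted0 ?leads0.
pose h' := lower_heights h.
have [IHN IHA] : count_sorted ltn n h' = count_sorted gtn n h' /\
    forall m, 0 < m <= h' n.-1 -> count_leading ltn n h' m.-1 m = count_leading gtn n h' 0 m.
  by apply: IH; [exact: lower_heights_noninc | rewrite /h' /lower_heights; lia].
have [h_n0|h_gt0] := posnP (h n).
  by split=> [|m]; [rewrite !count_sorted_last0 | move=> /andP /= [? ?]; lia].
have le_hn : h n <= n.+1 by have := h_noninc n 0; lia.
have le_hn' : h n <= h n.-1 by apply: h_noninc; lia.
have IHA_last : 1 < h n ->
    count_leading ltn n h' (h n).-2 (h n).-1 = count_leading gtn n h' 0 (h n).-1.
  by move=> ?; apply: IHA; rewrite /h' /lower_heights; lia.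
have counts_eq : count_sorted ltn n.+1 h = count_sorted gtn n.+1 h.
  rewrite count_sorted_ltn_rec // count_sorted_gtn_rec // IHN.
  by case: (ltnP 1 (h n)) => [/IHA_last->|].
split=> // m /andP [m_gt0 le_mh] /=.
have [le_m1|m_ge2] := leqP m 1; first by rewrite (_ : m = 1) ?count_leading_zero_one //; lia.
have m_range : 2 <= m <= h n by rewrite m_ge2.
have h_gt1 : 1 < h n by lia.
rewrite count_leading_ltn_rec // count_leading_gtn_rec //.
have [->|ne_mh] := eqVneq m (h n); first by rewrite ltnn mul0n add0n mul1n IHA_last.
have lt_mh : m < h n by rewrite ltn_neqAle ne_mh.
rewrite lt_mh mul1n mul0n addn0 IHA; last by rewrite /h' /lower_heights; lia.
apply: count_leading_gtn_eq; first exact: lower_heights_noninc.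
  by rewrite m_ge2 /h' /lower_heights; lia.
by rewrite /h' /lower_heights; lia.
Qed.

Lemma card_ord_lt n k : k <= n -> #|[set i : 'I_n | i < k]| = k.
Proof.
move=> le_kn; have widen_inj : injective (widen_ord le_kn) by move=> a b /(congr1 val) /= /val_inj.
rewrite -[RHS]card_ord -(card_imset _ widen_inj).
apply: eq_card => i; rewrite inE; apply/idP/imsetP => [lt_ik|[j _ ->]]; last exact: (ltn_ord j).
by exists (Ordinal lt_ik) => //; apply: val_inj.
Qed.

Lemma exists_rank_perm m (g : 'I_m -> nat) : injective g ->
  exists s : 'S_m, forall a b, (s a < s b) = (g a < g b).
Proof.
move=> g_inj; pose rk b := #|[set a | g a < g b]|.
have rk_lt b : rk b < m.
  rewrite -[m]card_ord -cardsT; apply: proper_card; rewrite properT.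
  by apply/negP => /eqP full; have := in_setT b; rewrite -full inE ltnn.
have rk_mono a b : g a < g b -> rk a < rk b.
  move=> lt_ab; apply: proper_card; apply/properP; split; last by exists a; rewrite !inE ?ltnn.
  by apply/subsetP => x; rewrite !inE => /ltn_trans; apply.
have rk_inj : injective (fun b => Ordinal (rk_lt b)).
  move=> a b /(congr1 val) /= eq_rk; apply: g_inj.
  by case: (ltngtP (g a) (g b)) => // /rk_mono; rewrite eq_rk ltnn.
exists (perm rk_inj) => a b; rewrite !permE /=.
apply/idP/idP => [|/rk_mono //]; apply: contraLR; rewrite -!leqNgt leq_eqVlt.
by case/orP => [/eqP/g_inj-> | /rk_mono/ltnW].
Qed.

Definition col_height n (lam : 'I_n -> nat) c := #|[set i : 'I_n | c < lam i]|.

Section ColumnHeights.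

Variables (n : nat) (lam : 'I_n -> nat).
Hypothesis lam_noninc : {homo lam : i j /~ i <= j}.

Lemma lt_col_height (r : 'I_n) c : (c < lam r) = (r < col_height lam c).
Proof.
apply/idP/idP => [lt_c | lt_r].
  rewrite -[r.+1](@card_ord_lt n) //; apply: subset_leq_card.
  apply/subsetP => i; rewrite !inE ltnS => le_ir.
  exact: leq_trans lt_c (lam_noninc le_ir).
rewrite ltnNge; apply: contraL lt_r => le_lam.
rewrite -leqNgt -[X in _ <= X](card_ord_lt (ltnW (ltn_ord r))).
apply: subset_leq_card; apply/subsetP => i; rewrite !inE; apply: contraLR.
by rewrite -!leqNgt => le_ri; apply: leq_trans le_lam; apply: lam_noninc.
Qed.

Lemma col_height_noninc : {homo col_height lam : c d /~ c <= d}.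
Proof.
move=> c d le_dc; apply: subset_leq_card; apply/subsetP => i; rewrite !inE.
exact: leq_ltn_trans.
Qed.

Lemma col_height_le c : col_height lam c <= n.
Proof. by rewrite -[X in _ <= X]card_ord max_card. Qed.

Lemma transversal_under_heights (R : 'S_n) :
  Defs.transversal lam (R^-1)%g = under_heights (col_height lam) R.
Proof.
apply/forallP/forallP => sub_lam x; [rewrite -lt_col_height | rewrite lt_col_height].
  by have := sub_lam (R x); rewrite permK.
by have := sub_lam (R^-1 x)%g; rewrite permKV.
Qed.

(* Only the columns of an occurrence need to be chosen: its rows are those
   holding the 1s of these columns, and their order gives the permutation. *)
Lemma pop_containsE m (P : rel 'I_m) (R : 'S_n) :
  pop_contains P lam (R^-1)%g =
  [exists c : {ffun 'I_m -> 'I_n}, [forall a : 'I_m, forall b : 'I_m,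
     [&& (a < b) ==> (c a < c b), R (c a) < col_height lam (c b)
       & P a b ==> (R (c a) < R (c b))]]].
Proof.
rewrite /pop_contains invgK; apply/existsP/existsP.
  move=> [r /existsP [c /existsP [s /andP [/forallP occ /forallP rows]]]].
  exists c; apply/forallP => a; apply/forallP => b.
  have R_c x : R (c x) = r (s x) by apply/eqP: (rows x).
  have /and4P [_ lt_c _ P_s] := forallP (occ a) b.
  have /and4P [_ _ in_lam _] := forallP (occ (s a)) b.
  have /and4P [lt_r _ _ _] := forallP (occ (s a)) (s b).
  rewrite lt_c R_c -lt_col_height in_lam !R_c /=.
  by apply/implyP => /(implyP P_s); exact: (implyP lt_r).
move=> [c /forallP occ].
have lt_c (a b : 'I_m) : a < b -> c a < c b.
  by move=> lt_ab; have /and3P [/implyP -> //] := forallP (occ a) b.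
have Rc_inj : injective (fun b => val (R (c b))).
  move=> a b /val_inj/perm_inj eq_c; apply/eqP; apply: contraT => ne_ab.
  by case: (ltngtP a b) ne_ab => [/lt_c|/lt_c|/val_inj->]; rewrite ?eq_c ?ltnn ?eqxx.
have [s rank_s] := exists_rank_perm Rc_inj.
exists [ffun x => R (c (s^-1 x))%g]; apply/existsP; exists c; apply/existsP; exists s.
apply/andP; split; last by apply/forallP => b; rewrite ffunE permK.
apply/forallP => a; apply/forallP => b; rewrite !ffunE.
have /and3P [lt_ab _ P_ab] := forallP (occ a) b.
have /and3P [_ in_lam _] := forallP (occ (s^-1 a)%g) b.
by rewrite -rank_s !permKV implybb lt_ab lt_col_height in_lam rank_s P_ab.
Qed.

End ColumnHeights.

Local Notation ord3 i := (@Ordinal 3 i isT).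

Lemma pop_contains_triplesE n (lam : 'I_n -> nat) (P : rel 'I_3) (p12 p21 : bool)
    (ord : rel nat) (R : 'S_n) :
  {homo lam : i j /~ i <= j} ->
  (forall a b : 'I_3,
     P a b = [&& val a == 1, val b == 2 & p12] || [&& val a == 2, val b == 1 & p21]) ->
  (forall x y, x != y -> (p12 ==> (x < y)) && (p21 ==> (y < x)) = ~~ ord x y) ->
  pop_contains P lam (R^-1)%g = ~~ triples_sorted ord (col_height lam) R.
Proof.
move=> lam_noninc PE ordE; rewrite pop_containsE //; apply/existsP/idP.
  move=> [c /forallP occ]; apply/negP => /forallP sorted_R.
  have /and3P [lt01 _ _] := forallP (occ (ord3 0)) (ord3 1).
  have /and3P [lt12 in12 P12] := forallP (occ (ord3 1)) (ord3 2).
  have /and3P [_ in02 _] := forallP (occ (ord3 0)) (ord3 2).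
  have /and3P [_ in22 _] := forallP (occ (ord3 2)) (ord3 2).
  have /and3P [_ _ P21] := forallP (occ (ord3 2)) (ord3 1).
  rewrite /= in lt01 lt12.
  have := forallP (forallP (sorted_R (c (ord3 0))) (c (ord3 1))) (c (ord3 2)).
  rewrite lt01 lt12 in02 in12 in22 /= => ord12.
  have ne12 : R (c (ord3 1)) != R (c (ord3 2)) :> nat.
    by apply: contraTneq lt12 => /val_inj/perm_inj->; rewrite ltnn.
  by move: (ordE _ _ ne12); rewrite !PE /= orbF in P12 P21; rewrite P12 P21 ord12.
move=> /forallPn [i /forallPn [j /forallPn [k]]].
rewrite negb_imply => /andP [/and5P [lt_ij lt_jk in_i in_j in_k] not_ord].
have ne_jk : R j != R k :> nat.
  by apply: contraTneq lt_jk => /val_inj/perm_inj->; rewrite ltnn.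
have /andP [/implyP P12 /implyP P21] : (p12 ==> (R j < R k)) && (p21 ==> (R k < R j)).
  by rewrite ordE.
pose c := [ffun b : 'I_3 => if val b == 0 then i else if val b == 1 then j else k].
have c_mono (a b : 'I_3) : a < b -> c a < c b.
  by rewrite !ffunE; case: a b => [[|[|[|?]]] ?] [[|[|[|?]]] ?] //=; lia.
have c_le (b : 'I_3) : c b <= k.
  by rewrite ffunE; case: b => [[|[|[|?]]] ?] //=; lia.
have R_c (a : 'I_3) : R (c a) < col_height lam k.
  by rewrite ffunE; case: a => [[|[|[|?]]] ?].
have P_c (a b : 'I_3) : P a b -> R (c a) < R (c b).
  by rewrite PE !ffunE; case: a b => [[|[|[|?]]] ?] [[|[|[|?]]] ?] //=; rewrite orbF.
exists c; apply/forallP => a; apply/forallP => b; apply/and3P; split.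
- exact/implyP/c_mono.
- exact: leq_trans (R_c a) (col_height_noninc lam (c_le b)).
- exact/implyP/P_c.
Qed.

Lemma num_avoiders_count_sorted m (P : rel 'I_m) (ord : rel nat) n (lam : 'I_n -> nat) :
  {homo lam : i j /~ i <= j} ->
  (forall R : 'S_n, pop_contains P lam (R^-1)%g = ~~ triples_sorted ord (col_height lam) R) ->
  num_avoiders P lam = count_sorted ord n (col_height lam).
Proof.
move=> lam_noninc containsE.
rewrite /num_avoiders /count_sorted -(card_preimset _ (@invg_inj _)).
by apply: eq_card => R; rewrite !inE containsE negbK transversal_under_heights.
Qed.

Theorem theorem1p6 : shape_wilf_equiv pop_p pop_p'.
Proof.
move=> n lam [lam_noninc _].
have lam_homo : {homo lam : i j /~ i <= j} by move=> i j /lam_noninc.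
rewrite (@num_avoiders_count_sorted _ _ ltn) => // [|R]; last first.
  apply: (pop_contains_triplesE (p12 := false) (p21 := true)) => // [a b|x y ne_xy].
    by rewrite /pop_p !andbF !andbT.
  by rewrite /= -leqNgt ltn_neqAle eq_sym ne_xy.
rewrite (@num_avoiders_count_sorted _ _ gtn) => // [|R]; last first.
  apply: (pop_contains_triplesE (p12 := true) (p21 := false)) => // [a b|x y ne_xy].
    by rewrite /pop_p' !andbF !andbT orbF.
  by rewrite /= andbT -leqNgt ltn_neqAle ne_xy.
by case: (count_sorted_ltn_gtn (col_height_noninc lam) (col_height_le lam 0)).
Qed.
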